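(* (i) Every positive integer $N\equiv 1\pmod 8$ can be written as $N=x^2+P$ with $x$ a nonnegative integer and $P$ a practical number. (ii) For every $j\in\{0,2,3,4,5,6,7\}$ there exist infinitely many nonnegative integers $k$ such that $8k+j$ cannot be written as $x^2+P$ with $x$ a nonnegative integer and $P$ a practical number.
   Context: A positive integer $N$ is called a practical number if every integer in $[1,N]$ can be expressed as a sum of distinct positive divisors of $N$. *)

From mathcomp Require Import all_boot.

Definition practical (N : nat) : Prop :=
  0 < N /\
  forall m, 1 <= m <= N ->
    exists s : seq nat, [/\ uniq s, all (fun d => (0 < d) && (d %| N)) s & sumn s = m].

Definition sq_plus_practical (N : nat) : Prop :=
  exists x P : nat, practical P /\ N = x ^ 2 + P.

From mathcomp Require Import all_boot zify.

(* (i) For 4^(a+1) < N <= 4^(a+2), Hensel lifting gives an odd x <= 2^(a+1)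
   with x^2 = N (mod 2^(a+3)), so N - x^2 = 2^(a+3) m with 0 < m < 2^(a+4).
   Every 2^b m' with m' odd and m' < 2^(b+1) is practical: split t < 2^b m'
   as q m' + r with q < 2^b, r < m' and expand q and r in binary.
   (ii) If 2^a m is practical with m > 1, then 2^(a+1) is a sum of distinct
   divisors, which cannot all be powers of 2, so m has a prime factor
   p <= 2^(a+1).  Hence no term of c + L k is of the form x^2 + P once c is a
   non-square modulo 2^(A+1) and modulo every odd prime p <= 2^(A+1), and
   c - 2^a is a non-square modulo some divisor of L for each a <= A, where
   2^(A+1) and those primes divide L. *)

Lemma sumn_map_muln m s : sumn (map (muln m) s) = m * sumn s.
Proof. by elim: s => [|x s IH] /=; rewrite ?IH; lia. Qed.

Lemma leq_sumn_mem [d : nat] [s : seq nat] : d \in s -> d <= sumn s.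
Proof. by elim: s => [|x s IH] //=; rewrite inE => /predU1P[->|/IH]; lia. Qed.

Lemma leq_sumn_subset [s t : seq nat] :
  uniq s -> uniq t -> {subset s <= t} -> sumn s <= sumn t.
Proof.
by move=> us ut st; rewrite !sumnE (uniq_sub_le_big leqnn (fun x y => leq_addr y x)).
Qed.

Lemma sumn_pow2 k : sumn [seq 2 ^ i | i <- iota 0 k] = (2 ^ k).-1.
Proof.
elim: k => [|k IH] //; rewrite -[k.+1]addn1 iotaD map_cat sumn_cat IH /=.
by rewrite add0n addn0 addn1 expnS; have := expn_gt0 2 k; lia.
Qed.

Fixpoint pow2_expansion (k q : nat) : seq nat :=
  if k is k'.+1 then
    (if odd q then [:: 1] else [::]) ++ map (muln 2) (pow2_expansion k' q./2)
  else [::].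

Lemma pow2_expansion_pow k q d :
  d \in pow2_expansion k q -> exists2 i, i < k & d = 2 ^ i.
Proof.
elim: k q d => [|k IH] q d //=; rewrite mem_cat => /orP[|/mapP[e /IH[i ik ->] ->]].
  by case: (odd q); rewrite ?inE // => /eqP->; exists 0.
by exists i.+1; rewrite ?expnS.
Qed.

Lemma pow2_expansion_uniq k q : uniq (pow2_expansion k q).
Proof.
elim: k q => [|k IH] q //=; rewrite cat_uniq map_inj_uniq ?IH; last first.
  by move=> u v /eqP; rewrite eqn_pmul2l // => /eqP.
rewrite andbT; apply/andP; split; first by case: (odd q).
apply/hasPn => _ /mapP[e /pow2_expansion_pow[i _ ->] ->].
by case: (odd q); rewrite // inE -expnS; apply/eqP => /(congr1 odd); rewrite oddX.
Qed.

Lemma sumn_pow2_expansion k q : q < 2 ^ k -> sumn (pow2_expansion k q) = q.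
Proof.
elim: k q => [|k IH] q /=; first by rewrite expn0; case: q.
have := odd_double_half q; rewrite -muln2 expnS => defq qk.
rewrite sumn_cat sumn_map_muln IH; case: (odd q) defq qk => /=; lia.
Qed.

Lemma practical_pow2_mul_odd a m :
  odd m -> m < 2 ^ a.+1 -> practical (2 ^ a * m).
Proof.
move=> om ma; have m0 := odd_gt0 om.
have dvd_pow2 i : i <= a -> 2 ^ i %| 2 ^ a * m.
  by move=> ia; rewrite dvdn_mulr ?dvdn_exp2l.
split=> [|t /andP[t0]]; first by rewrite muln_gt0 expn_gt0.
rewrite leq_eqVlt => /predU1P[->|tlt].
  by exists [:: 2 ^ a * m]; rewrite /= muln_gt0 expn_gt0 m0 dvdnn addn0.
set q := t %/ m; set r := t %% m.
have qa : q < 2 ^ a by rewrite ltn_divLR // mulnC.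
have ra : r < 2 ^ a.+1 by apply: ltn_trans (ltn_pmod _ m0) ma.
exists (map (muln m) (pow2_expansion a q) ++ pow2_expansion a.+1 r); split.
- rewrite cat_uniq map_inj_uniq ?pow2_expansion_uniq; last first.
    by move=> u v /eqP; rewrite eqn_pmul2l // => /eqP.
  rewrite andbT; apply/hasPn => y /[dup] ry /pow2_expansion_pow[j _ yj].
  apply/mapP => -[e /pow2_expansion_pow[i _ ->] yme].
  have m1 : m = 1.
    apply/eqP; rewrite -dvdn1 -(@Gauss_dvdr _ (2 ^ j)) ?coprimeXr ?coprimen2 // muln1.
    by rewrite -yj yme dvdn_mulr.
  have := leq_sumn_mem ry; rewrite sumn_pow2_expansion // /r m1 modn1 yj.
  by rewrite leqn0 expn_eq0.
- rewrite all_cat; apply/andP; split; apply/allP => d.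
    case/mapP=> e /pow2_expansion_pow[i ia ->] ->.
    by rewrite muln_gt0 expn_gt0 m0 mulnC dvdn_mul ?dvdn_exp2l 1?ltnW.
  by case/pow2_expansion_pow=> i ia ->; rewrite expn_gt0 dvd_pow2.
- by rewrite sumn_cat sumn_map_muln !sumn_pow2_expansion // [t](divn_eq t m); lia.
Qed.

Lemma practical_pow2_mul a m : 0 < m -> m < 2 ^ a.+1 -> practical (2 ^ a * m).
Proof.
move=> m0 ma; have [m' /[!coprime2n] m'odd defm] := pfactor_coprime (isT : prime 2) m0.
rewrite defm (mulnC m') mulnA -expnD.
apply: practical_pow2_mul_odd => //.
have m'm : m' <= m by rewrite defm leq_pmulr ?expn_gt0.
by apply: leq_ltn_trans m'm (leq_trans ma _); rewrite leq_exp2l // ltnS leq_addr.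
Qed.

Lemma add_mul_half_eq N y q r T : odd q = odd r ->
  N + q * T = y + r * T -> N + q./2 * T.*2 = y + r./2 * T.*2.
Proof.
move=> eqo; rewrite -[q in q * T]odd_double_half -[r in r * T]odd_double_half eqo.
by rewrite -!muln2; nia.
Qed.

(* The equation says x^2 = N (mod 2^(a+3)) without subtraction.  Hensel
   lifting: if x does not lift to a root modulo 2^(a+4), then 2^(a+2) - x does. *)
Lemma odd_sqrt_mod_pow2 [N] : N %% 8 = 1 -> forall a,
  exists x q r, [/\ odd x, x <= 2 ^ a.+1 & N + q * 2 ^ a.+3 = x ^ 2 + r * 2 ^ a.+3].
Proof.
move=> N8; elim=> [|a [x [q [r [ox xle e]]]]].
  by exists 1, 0, (N %/ 8); split => //; rewrite {1}(divn_eq N 8) N8; lia.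
have dblT : (2 ^ a.+3).*2 = 2 ^ a.+4 by rewrite -mul2n expnS.
have [eqo|neqo] := eqVneq (odd q) (odd r).
  exists x, q./2, r./2; split => //; first by rewrite expnS; lia.
  by rewrite -dblT; apply: add_mul_half_eq.
set z := 2 ^ a.+2 - x.
have xz : x + z = 2 ^ a.+2 by rewrite /z expnS; lia.
have zsq : z ^ 2 + 2 ^ a.+3 * x = x ^ 2 + 2 ^ a.+1 * 2 ^ a.+3.
  by move: xz; rewrite !expnS; nia.
exists z, (q + 2 ^ a.+1)./2, (x + r)./2; split.
- by move: (congr1 odd xz); rewrite oddD ox expnS oddM /= => /negbFE.
- by rewrite /z; lia.
- rewrite -dblT; apply: add_mul_half_eq; last by nia.
  by rewrite !oddD ox expnS oddM /=; move: neqo; case: (odd q); case: (odd r).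
Qed.

Lemma sq_plus_practical_1mod8 N : 0 < N -> N %% 8 = 1 -> sq_plus_practical N.
Proof.
move=> N0 N8; have [->|N1] := eqVneq N 1.
  by exists 0, 1; split => //; apply: (practical_pow2_mul 0 1).
have [a /andP[lo hi]] : exists a, 4 ^ a.+1 < N <= 4 ^ a.+2.
  have := up_logP N (isT : 1 < 4); have := @up_log_gtn 4 N isT.
  case: (up_log 4 N) => [|[|e]] /=; try lia.
  by move=> lo hi; exists e; rewrite hi andbT; apply: lo; lia.
have [x [q [r [ox xle e]]]] := odd_sqrt_mod_pow2 N8 a.
have x2 : x ^ 2 <= 4 ^ a.+1 by rewrite -[4]/(2 ^ 2) expnAC leq_exp2r.
have E : 4 ^ a.+2 = 2 ^ a.+3 * 2 ^ a.+1.
  by rewrite -[4]/(2 ^ 2) -expnM -expnD; congr (_ ^ _); lia.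
have T0 : 0 < 2 ^ a.+3 by rewrite expn_gt0.
have qr : q < r by nia.
exists x, (2 ^ a.+3 * (r - q)); split; last by nia.
apply: practical_pow2_mul; first lia.
have : r - q <= 2 ^ a.+1 by rewrite -(leq_pmul2l T0); nia.
by rewrite !expnS; have := expn_gt0 2 a; lia.
Qed.

Lemma not_practical_pow2_mul [a m] : 1 < m ->
  (forall p, prime p -> p %| m -> 2 ^ a.+1 < p) -> ~ practical (2 ^ a * m).
Proof.
move=> m1 large [_ prac].
have [|s [us /allP sdiv ssum]] := prac (2 ^ a.+1).
  by rewrite expn_gt0 expnS mulnC leq_mul2l; lia.
have pow2s : {subset s <= [seq 2 ^ i | i <- iota 0 a.+1]}.
  move=> d ds; have /andP[d0 dP] := sdiv d ds.
  have dle : d <= 2 ^ a.+1 by rewrite -ssum leq_sumn_mem.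
  have cdm : coprime d m.
    apply/negPn/negP => ncop; set g := gcdn d m.
    have g1 : 1 < g by rewrite ltn_neqAle eq_sym ncop gcdn_gt0 d0.
    have := large _ (pdiv_prime g1) (dvdn_trans (pdiv_dvd g) (dvdn_gcdr d m)).
    have := dvdn_leq d0 (dvdn_trans (pdiv_dvd g) (dvdn_gcdl d m)); lia.
  move: dP; rewrite Gauss_dvdl // => /dvdn_pfactor[] // i ia ->.
  by apply: map_f; rewrite mem_iota.
have := leq_sumn_subset us _ pow2s; rewrite map_inj_uniq ?iota_uniq; last exact: expnI.
by rewrite sumn_pow2 ssum => /(_ isT); have := expn_gt0 2 a.+1; lia.
Qed.

Definition sq_plus_avoids (q d c : nat) : bool :=
  all (fun r => (r * r + d) %% q != c %% q) (iota 0 q).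

Lemma sq_plus_avoidsP [q d c] x y :
  0 < q -> sq_plus_avoids q d c -> x ^ 2 + d + q * y != c %[mod q].
Proof.
move=> q0 /allP avoid; have := avoid (x %% q); rewrite mem_iota ltn_pmod // => /(_ isT).
have -> : x ^ 2 + d + q * y = y * q + (x * x + d) by lia.
by rewrite modnMDl -modnDml modnMml modnMmr modnDml.
Qed.

Definition sq_plus_practical_obstruction (A c L : nat) (qs : seq nat) : bool :=
  [&& 2 ^ A.+1 %| L, sq_plus_avoids (2 ^ A.+1) 0 c,
   all (fun p => prime p && odd p ==> (p %| L) && sq_plus_avoids p 0 c)
       (iota 0 (2 ^ A.+1).+1) &
   all (fun a => has (fun q => (q %| L) && sq_plus_avoids q (2 ^ a) c) qs) (iota 0 A.+1)].

Lemma obstruction_not_sq_plus_practical A c L qs k : 0 < L ->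
  sq_plus_practical_obstruction A c L qs -> ~ sq_plus_practical (c + L * k).
Proof.
move=> L0 /and4P[L2 avoid2 /allP oddp /allP pow2] [x [P [prac E]]].
have avoid q d y : 0 < q -> q %| L -> sq_plus_avoids q d c -> P <> d + q * y.
  move=> q0 /dvdnP[l defL] /(sq_plus_avoidsP x y q0) /negP + defP; apply.
  by rewrite -addnA -defP -E defL addnC mulnAC modnMDl.
have P0 : 0 < P by case: prac.
have [m /[!coprime2n] om defP] := pfactor_coprime (isT : prime 2) P0.
set a := logn 2 P in defP; have m0 := odd_gt0 om.
have aA : a <= A.
  rewrite leqNgt; apply/negP => Aa; apply: (avoid _ 0 (2 ^ (a - A.+1) * m) _ L2 avoid2).
    by rewrite expn_gt0.
  by rewrite defP mulnC mulnA -expnD subnKC.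
have m1 : 1 < m.
  rewrite ltn_neqAle eq_sym m0 andbT; apply/eqP => m1.
  have ain : a \in iota 0 A.+1 by rewrite mem_iota.
  have /hasP[q _ /andP[qL /(avoid q _ 0 (dvdn_gt0 L0 qL) qL)]] := pow2 a ain; apply.
  by rewrite defP m1 mul1n muln0 addn0.
rewrite defP mulnC in prac; apply: (not_practical_pow2_mul m1 _ prac) => p pp pm.
rewrite ltnNge; apply/negP => ple.
have po : odd p by case: (even_prime pp) pm => [->|//]; rewrite dvdn2 om.
have /andP[pL pavoid] : (p %| L) && sq_plus_avoids p 0 c.
  have := oddp p; rewrite pp po mem_iota /=; apply.
  by rewrite add0n ltnS (leq_trans ple) ?leq_exp2l.
apply: (avoid p 0 (2 ^ a * (m %/ p)) (prime_gt0 pp) pL pavoid).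
by rewrite defP add0n (mulnC p) -mulnA divnK // mulnC.
Qed.

Lemma obstruction_infinitely_many A c L qs M :
  0 < L -> M %| L -> sq_plus_practical_obstruction A c L qs ->
  forall K, exists k, K <= k /\ ~ sq_plus_practical (M * k + c %% M).
Proof.
move=> L0 ML obs K; have M0 : 0 < M by apply: dvdn_gt0 L0 ML.
have LM : 0 < L %/ M by rewrite divn_gt0 // dvdn_leq.
exists (c %/ M + L %/ M * K); split; first nia.
have -> : M * (c %/ M + L %/ M * K) + c %% M = c + L * K.
  by have := divn_eq c M; have := divnK ML; nia.
exact: obstruction_not_sq_plus_practical obs.
Qed.

Theorem theorem3p3 :
  (forall N : nat, 0 < N -> N %% 8 = 1 -> sq_plus_practical N) /\
  (forall j : nat, j \in [:: 0; 2; 3; 4; 5; 6; 7] ->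
     forall K : nat, exists k : nat, K <= k /\ ~ sq_plus_practical (8 * k + j)).
Proof.
split; first exact: sq_plus_practical_1mod8.
move=> j /[!inE]; do ![case/predU1P=> [->|]]; last move/eqP->.
- by apply: (obstruction_infinitely_many 3 1592 240240 [:: 16; 5; 13]); vm_compute.
- by apply: (obstruction_infinitely_many 2 698 840 [:: 5; 7; 8]); vm_compute.
- by apply: (obstruction_infinitely_many 2 467 840 [:: 8; 7]); vm_compute.
- by apply: (obstruction_infinitely_many 3 8588 240240 [:: 16; 7]); vm_compute.
- by apply: (obstruction_infinitely_many 2 773 840 [:: 5; 8; 7]); vm_compute.
- by apply: (obstruction_infinitely_many 2 278 840 [:: 8; 7]); vm_compute.
- by apply: (obstruction_infinitely_many 2 47 840 [:: 8]); vm_compute.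
Qed.
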